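(* Let $\alpha,\beta$ be sets, $z\in\beta$, $\mathit{seq}:\beta\times\alpha\to\beta$ and $\mathit{comb}:\beta\times\beta\to\beta$, written $x\oplus y=\mathit{comb}(x,y)$. Let $\Gamma=\{\mathrm{foldl}(\mathit{seq},z,L) : L \text{ a finite list over }\alpha\}$. Then calls $\mathrm{aggregate}(z,\mathit{seq},\mathit{comb},\mathit{rdd})$ have deterministic outcomes if and only if (1) $(\Gamma,\oplus,z)$ is a commutative monoid (i.e. $\oplus$ maps $\Gamma\times\Gamma$ into $\Gamma$, is associative and commutative on $\Gamma$, with identity $z$ on $\Gamma$), and (2) for all $d\in\alpha$ and $e\in\Gamma$, $\mathit{seq}(e,d)=e\oplus\mathit{seq}(z,d)$.
   Context: Lists are finite; $\mathbin{+\!\!+}$ is list concatenation. For $f:B\times A\to B$, $b\in B$: $\mathrm{foldl}(f,b,[\,])=b$ and $\mathrm{foldl}(f,b,[x_1,\dots,x_n])=f(\cdots f(f(b,x_1),x_2)\cdots,x_n)$. An RDD over $\alpha$ is a list of lists over $\alpha$. A partitioning is a function $P$ sending each list $L$ over $\alpha$ to an RDD obtained by splitting $L$ into consecutive (possibly empty) pieces $p_1,\dots,p_n$ with $p_1\mathbin{+\!\!+}\cdots\mathbin{+\!\!+}p_n=L$ and then arbitrarily permuting $[p_1,\dots,p_n]$. Define $\mathrm{aggregate}_{\mathrm{det}}(z,\mathit{seq},\mathit{comb},[q_1,\dots,q_m])=\mathrm{foldl}(\mathit{comb},z,[\mathrm{foldl}(\mathit{seq},z,q_1),\dots,\mathrm{foldl}(\mathit{seq},z,q_m)])$.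 Calls $\mathrm{aggregate}(z,\mathit{seq},\mathit{comb},\mathit{rdd})$ have deterministic outcomes if $\mathrm{aggregate}_{\mathrm{det}}(z,\mathit{seq},\mathit{comb},P(L))=\mathrm{foldl}(\mathit{seq},z,L)$ for all lists $L$ over $\alpha$ and all partitionings $P$. *)

From Stdlib Require Import List Permutation.
Import ListNotations.

Definition foldl {A B : Type} (f : B -> A -> B) (b : B) (l : list A) : B :=
  fold_left f l b.

Definition rdd (A : Type) : Type := list (list A).

Definition is_partition_of {A : Type} (L : list A) (r : rdd A) : Prop :=
  exists ps : list (list A), concat ps = L /\ Permutation ps r.

Definition partitioning {A : Type} (P : list A -> rdd A) : Prop :=
  forall L, is_partition_of L (P L).

Definition aggregate_det {A B : Type} (z : B) (sq : B -> A -> B)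
  (comb : B -> B -> B) (r : rdd A) : B :=
  foldl comb z (map (fun q => foldl sq z q) r).

Definition deterministic {A B : Type} (z : B) (sq : B -> A -> B)
  (comb : B -> B -> B) : Prop :=
  forall P : list A -> rdd A, partitioning P ->
  forall L : list A, aggregate_det z sq comb (P L) = foldl sq z L.

Definition Gamma {A B : Type} (z : B) (sq : B -> A -> B) (e : B) : Prop :=
  exists L : list A, e = foldl sq z L.

Definition comm_monoid_on {B : Type} (G : B -> Prop) (op : B -> B -> B) (z : B)
  : Prop :=
  (forall x y, G x -> G y -> G (op x y)) /\
  (forall x y w, G x -> G y -> G w -> op (op x y) w = op x (op y w)) /\
  (forall x y, G x -> G y -> op x y = op y x) /\
  G z /\
  (forall x, G x -> op z x = x /\ op x z = x).

From Stdlib Require Import List Permutation.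
Import ListNotations.

(* Both sides of the equivalence say that [g := foldl sq z] is a monoid
   morphism from lists under concatenation to [comb], whose image [Gamma] is
   commutative.  Determinism applied to the partitions [[l1; l2]] and
   [[l2; l1]] of [l1 ++ l2] gives [comb (g l1) (g l2) = g (l1 ++ l2) =
   comb (g l2) (g l1)]; conversely these two identities make the aggregate of
   any permuted partition of [L] equal to [g L].  Condition (2) is the
   morphism identity for [l2 = [d]], and it yields the general identity by
   induction on [l2]. *)

Lemma foldl_app {A B : Type} (f : B -> A -> B) (b : B) (l1 l2 : list A) :
  foldl f b (l1 ++ l2) = foldl f (foldl f b l1) l2.
Proof. apply fold_left_app. Qed.

Definition split_at {A : Type} (k : nat) (L : list A) : rdd A :=
  [firstn k L; skipn k L].

Lemma split_at_app {A : Type} (l1 l2 : list A) :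
  split_at (length l1) (l1 ++ l2) = [l1; l2].
Proof.
  unfold split_at.
  rewrite firstn_app, skipn_app, PeanoNat.Nat.sub_diag, firstn_all, skipn_all.
  simpl. now rewrite app_nil_r.
Qed.

Lemma partitioning_singleton {A : Type} : partitioning (fun L : list A => [L]).
Proof. intro L. exists [L]. split; [apply app_nil_r | reflexivity]. Qed.

Lemma partitioning_split_at {A : Type} (k : nat) : partitioning (@split_at A k).
Proof.
  intro L. exists (split_at k L). split; [|reflexivity].
  unfold split_at. simpl. rewrite app_nil_r. apply firstn_skipn.
Qed.

Lemma partitioning_rev {A : Type} (P : list A -> rdd A) :
  partitioning P -> partitioning (fun L => rev (P L)).
Proof.
  intros HP L. destruct (HP L) as (ps & Hconcat & Hperm).
  exists ps. split; [exact Hconcat|].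
  eapply perm_trans; [exact Hperm | apply Permutation_rev].
Qed.

Section Aggregate.
Context {A B : Type} (z : B) (sq : B -> A -> B) (comb : B -> B -> B).
Local Notation g := (foldl sq z).

Lemma Gamma_foldl (l : list A) : Gamma z sq (g l).
Proof. now exists l. Qed.

Section FromDeterministic.
Hypothesis det : deterministic z sq comb.

Lemma deterministic_comb_z (l : list A) : comb z (g l) = g l.
Proof. exact (det _ partitioning_singleton l). Qed.

Lemma deterministic_foldl_app (l1 l2 : list A) :
  comb (g l1) (g l2) = g (l1 ++ l2).
Proof.
  pose proof (det _ (partitioning_split_at (length l1)) (l1 ++ l2)) as E.
  rewrite split_at_app in E. unfold aggregate_det in E. simpl in E.
  now rewrite deterministic_comb_z in E.
Qed.

Lemma deterministic_foldl_comm (l1 l2 : list A) :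
  comb (g l1) (g l2) = comb (g l2) (g l1).
Proof.
  pose proof (det _ (partitioning_rev _ (partitioning_split_at (length l1)))
                  (l1 ++ l2)) as E.
  cbv beta in E. rewrite split_at_app in E. unfold aggregate_det in E. simpl in E.
  rewrite deterministic_comb_z in E.
  now rewrite E, deterministic_foldl_app.
Qed.

End FromDeterministic.

Section FromMonoid.
Hypothesis HM : comm_monoid_on (Gamma z sq) comb z.
Hypothesis sq_comb : forall (d : A) (e : B), Gamma z sq e -> sq e d = comb e (sq z d).

Lemma foldl_Gamma_comb (q : list A) (e : B) :
  Gamma z sq e -> foldl sq e q = comb e (g q).
Proof.
  destruct HM as (Hclosed & Hassoc & _ & _ & Hunit).
  revert e; induction q as [|d q IH]; intros e He.
  - symmetry. apply Hunit, He.
  - assert (Hd : Gamma z sq (sq z d)) by exact (Gamma_foldl [d]).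
    simpl. rewrite sq_comb, IH, (IH (sq z d)) by auto.
    apply Hassoc; auto using Gamma_foldl.
Qed.

Lemma monoid_foldl_app (l1 l2 : list A) : comb (g l1) (g l2) = g (l1 ++ l2).
Proof. rewrite foldl_app. symmetry. apply foldl_Gamma_comb, Gamma_foldl. Qed.

End FromMonoid.

Section FromMorphism.
Hypothesis g_app : forall l1 l2 : list A, comb (g l1) (g l2) = g (l1 ++ l2).
Hypothesis g_comm : forall l1 l2 : list A, comb (g l1) (g l2) = comb (g l2) (g l1).

Lemma comm_monoid_on_Gamma : comm_monoid_on (Gamma z sq) comb z.
Proof.
  split; [|split; [|split; [|split]]].
  - intros x y [l1 ->] [l2 ->]. rewrite g_app. apply Gamma_foldl.
  - intros x y w [l1 ->] [l2 ->] [l3 ->]. now rewrite !g_app, app_assoc.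
  - intros x y [l1 ->] [l2 ->]. apply g_comm.
  - exact (Gamma_foldl []).
  - intros x [l ->]. split.
    + exact (g_app [] l).
    + pose proof (g_app l []) as E. now rewrite app_nil_r in E.
Qed.

Lemma sq_Gamma_comb (d : A) (e : B) : Gamma z sq e -> sq e d = comb e (sq z d).
Proof. intros [l ->]. rewrite (g_app l [d] : comb (g l) (sq z d) = _). now rewrite foldl_app. Qed.

Lemma foldl_comb_map (l : list A) (r : rdd A) :
  foldl comb (g l) (map g r) = g (l ++ concat r).
Proof.
  revert l; induction r as [|q r IH]; intro l; simpl.
  - now rewrite app_nil_r.
  - now rewrite g_app, IH, app_assoc.
Qed.

Lemma aggregate_det_concat (r : rdd A) : aggregate_det z sq comb r = g (concat r).
Proof. exact (foldl_comb_map [] r). Qed.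

Lemma foldl_concat_Permutation (ps r : rdd A) :
  Permutation ps r -> g (concat ps) = g (concat r).
Proof.
  induction 1 as [| q ps r _ IH | q q' ps | ps r t _ IH1 _ IH2]; simpl.
  - reflexivity.
  - now rewrite <- !g_app, IH.
  - now rewrite !app_assoc, <- (g_app (q' ++ q)), <- (g_app (q ++ q')),
      <- !g_app, g_comm.
  - congruence.
Qed.

Lemma deterministic_of_morphism : deterministic z sq comb.
Proof.
  intros P HP L. destruct (HP L) as (ps & Hconcat & Hperm).
  rewrite aggregate_det_concat, <- (foldl_concat_Permutation _ _ Hperm), Hconcat.
  reflexivity.
Qed.

End FromMorphism.
End Aggregate.

Theorem corollary1 (A B : Type) (z : B) (sq : B -> A -> B) (comb : B -> B -> B) :
  deterministic z sq comb <->
  (comm_monoid_on (Gamma z sq) comb z /\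
   (forall (d : A) (e : B), Gamma z sq e -> sq e d = comb e (sq z d))).
Proof.
  split.
  - intro det. split.
    + apply comm_monoid_on_Gamma;
        [apply deterministic_foldl_app | apply deterministic_foldl_comm]; exact det.
    + apply sq_Gamma_comb, deterministic_foldl_app, det.
  - intros [HM sq_comb]. apply deterministic_of_morphism.
    + exact (monoid_foldl_app _ _ _ HM sq_comb).
    + intros l1 l2. destruct HM as (_ & _ & Hcomm & _).
      apply Hcomm; apply Gamma_foldl.
Qed.
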